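(* Let $q\ge 2$ and let $f:H(2,q)\to\mathbb{R}$ be an additive function with $|S(f)|\le 2(q-1)$. Then one of the following holds: (1) $f\equiv 0$; (2) there exist $i\in\{1,2\}$, $k\in\{0,\dots,q-1\}$ and a constant $c\neq 0$ such that $f(x)=c$ for $x\in T_k(i,2)$ and $f(x)=0$ otherwise; (3) there exist $i\ne j$ in $\{1,2\}$, $k,m\in\{0,\dots,q-1\}$ and a constant $c\ne 0$ such that $f(x)=c$ for $x\in T_k(i,2)\setminus T_m(j,2)$, $f(x)=-c$ for $x\in T_m(j,2)\setminus T_k(i,2)$, and $f(x)=0$ otherwise.
   Context: The Hamming graph $H(N,q)$ has vertex set $\{0,1,\dots,q-1\}^N$, two words being adjacent iff they differ in exactly one coordinate. For $f:H(N,q)\to\mathbb{R}$, its support is $S(f)=\{x: f(x)\ne 0\}$. $T_k(i,N)$ denotes the set of vertices of $H(N,q)$ whose $i$-th coordinate equals $k$. For $f:H(N,q)\to\mathbb{R}$ ($N\ge1$), $i\in\{1,\dots,N\}$ and $k,m\in\{0,\dots,q-1\}$, define $g_{i,k,m}:H(N-1,q)\to\mathbb{R}$ by $g_{i,k,m}(t)=f(x)-f(y)$, where $x$ and $y$ are obtained from $t$ by inserting $k$, resp. $m$, as the $i$-th coordinate. The function $f$ is called additive if all functions $g_{i,k,m}$ are constant. *)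

From HB Require Import structures.
From mathcomp Require Import all_boot all_order all_algebra.
Set Implicit Arguments. Unset Strict Implicit. Unset Printing Implicit Defensive.
Import Order.TTheory GRing.Theory Num.Theory.
Local Open Scope ring_scope.

(* Vertices of H(N,q): words of length N over {0,..,q-1}; coordinates are
   indexed by 'I_N (coordinate i+1 of the paper is index i here). *)
Definition word (N q : nat) := {ffun 'I_N -> 'I_q}.

Definition supp (R : nzRingType) (N q : nat) (f : word N q -> R) : {set word N q} :=
  [set x | f x != 0].

Definition T (N q : nat) (k : 'I_q) (i : 'I_N) : {set word N q} :=
  [set x : word N q | x i == k].

Definition ins (N q : nat) (i : 'I_N.+1) (k : 'I_q) (t : word N q) : word N.+1 q :=
  [ffun j => if unlift i j is Some j' then t j' else k].

Definition gfun (R : nzRingType) (N q : nat) (f : word N.+1 q -> R)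
  (i : 'I_N.+1) (k m : 'I_q) (t : word N q) : R :=
  f (ins i k t) - f (ins i m t).

Definition additive_fun (R : nzRingType) (N q : nat) (f : word N.+1 q -> R) : Prop :=
  forall (i : 'I_N.+1) (k m : 'I_q), exists c : R, forall t, gfun f i k m t = c.

(** The additivity of [f] in the first coordinate says that [f(a,b) - f(a0,b)]
    does not depend on [b], so [f(a,b) = u a + v b] with [u a = f(a,b0)] and
    [v b = f(a0,b)], normalised at a zero [(a0,b0)] of [f] (one exists because
    [|S(f)| < q^2]).  If [u] vanishes on [α] points and [v] on [β] points, then
    [f] is nonzero on the [α(q-β) + (q-α)β] pairs where exactly one of [u a],
    [v b] vanishes.  Bounding this by [2(q-1)] leaves only four configurations:
    [u] or [v] is identically zero and the other has at most one nonzero value,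
    or both have exactly one nonzero value, or both have exactly one zero.  In
    the last two cases the count is already [2(q-1)], so [u a + v b = 0]
    whenever [u a] and [v b] are both nonzero, which forces the shape (3). *)

From HB Require Import structures.
From mathcomp Require Import all_boot all_order all_algebra.
From mathcomp Require Import zify.
Import Order.TTheory GRing.Theory Num.Theory.
Set Implicit Arguments. Unset Strict Implicit.

Lemma cross_count_small (q a a' b b' : nat) :
  (0 < a -> 0 < b -> a + a' = q -> b + b' = q ->
  a * b' + a' * b <= 2 * (q - 1) ->
  [\/ a' = 0 /\ b' <= 1, b' = 0 /\ a' <= 1,
      [/\ a' = 1, b' = 1 & a * b' + a' * b = 2 * (q - 1)]
    | [/\ a = 1, b = 1 & a * b' + a' * b = 2 * (q - 1)]])%N.
Proof.
move=> a_gt0 b_gt0 <- {q} sum_b count_le.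
case: a' sum_b count_le => [|a'] sum_b count_le; first by constructor 1; nia.
case: b' sum_b count_le => [|b'] sum_b count_le; first by constructor 2; nia.
have [a1|a_gt1] : a = 1 \/ 1 < a by lia.
  subst a; have [b1|b_gt1] : b = 1 \/ 1 < b by lia.
    by subst b; constructor 4; split; lia.
  have : a'.+1 * 2 <= a'.+1 * b by rewrite leq_mul2l.
  lia.
have [b1|b_gt1] : b = 1 \/ 1 < b by lia.
  subst b; have : b'.+1 * 2 <= b'.+1 * a by rewrite leq_mul2l.
  lia.
by constructor 3; split; nia.
Qed.

Local Open Scope ring_scope.

Lemma exists_ord_neq (q : nat) (x : 'I_q) : (1 < q)%N -> exists y : 'I_q, y != x.
Proof.
move=> q_gt1; have : (0 < #|[set~ x]|)%N by rewrite cardsC1 card_ord; lia.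
by case/card_gt0P => y; rewrite !inE; exists y.
Qed.

Definition nonzero_set (T : finType) (R : zmodType) (u : T -> R) : {set T} :=
  [set a | u a != 0].

Lemma nonzero_set0 (T : finType) (R : zmodType) (u : T -> R) :
  #|nonzero_set u| = 0%N -> forall a, u a = 0.
Proof.
move/cards0_eq/setP => Nu0 a; apply/eqP; apply: contraT => ua0.
by have := Nu0 a; rewrite !inE ua0.
Qed.

Lemma nonzero_set1 (T : finType) (R : zmodType) (u : T -> R) :
  #|nonzero_set u| = 1%N -> exists2 k, u k != 0 & forall a, u a = u k *+ (a == k).
Proof.
move/eqP/cards1P => [k Nu]; have Nu_a a : (u a != 0) = (a == k).
  by move/setP/(_ a): Nu; rewrite !inE.
exists k; first by rewrite Nu_a.
by move=> a; case: eqP => [-> //|/eqP]; rewrite -Nu_a negbK => /eqP.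
Qed.

Lemma nonzero_off_unique_zero (T : finType) (R : zmodType) (u : T -> R) a0 a :
  u a0 = 0 -> #|~: nonzero_set u| = 1%N -> a != a0 -> u a != 0.
Proof.
move=> ua0 /eqP/cards1P [k Zu]; apply: contraNN => /eqP ua.
have Zu_eq x : u x = 0 -> x = k by move=> ux; apply/set1P; rewrite -Zu !inE ux eqxx.
by rewrite (Zu_eq a ua) (Zu_eq a0 ua0).
Qed.

Section SumOfCoordinateFunctions.

Variables (R : zmodType) (q : nat) (u v : 'I_q -> R).

Definition sum_support : {set 'I_q * 'I_q} := [set ab | u ab.1 + v ab.2 != 0].

Let cross : {set 'I_q * 'I_q} :=
  setX (~: nonzero_set u) (nonzero_set v) :|: setX (nonzero_set u) (~: nonzero_set v).

Let cross_sub : cross \subset sum_support.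
Proof.
apply/subsetP => -[a b]; rewrite !inE /= !negbK => /orP[] /andP[ua vb].
  by rewrite (eqP ua) add0r.
by rewrite (eqP vb) addr0.
Qed.

Let card_cross : #|cross| =
  (#|~: nonzero_set u| * #|nonzero_set v| + #|nonzero_set u| * #|~: nonzero_set v|)%N.
Proof.
rewrite cardsU !cardsX; set I := _ :&: _.
suff -> : I = set0 by rewrite cards0 subn0.
by apply/setP => -[a b]; rewrite !inE /= andbACA andbN andbF.
Qed.

Lemma card_cross_le :
  (#|~: nonzero_set u| * #|nonzero_set v| + #|nonzero_set u| * #|~: nonzero_set v|
    <= #|sum_support|)%N.
Proof. by rewrite -card_cross subset_leq_card. Qed.

Lemma card_cross_lt a b : u a != 0 -> v b != 0 -> u a + v b != 0 ->
  (#|~: nonzero_set u| * #|nonzero_set v| + #|nonzero_set u| * #|~: nonzero_set v|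
    < #|sum_support|)%N.
Proof.
move=> ua vb uvab; have ab_cross : (a, b) \notin cross by rewrite !inE /= ua vb.
have sub : (a, b) |: cross \subset sum_support.
  by rewrite subUset cross_sub sub1set inE andbT.
by move: (subset_leq_card sub); rewrite cardsU1 ab_cross -card_cross.
Qed.

Lemma sum_vanishing_off_point a0 b0 a1 b1 :
  u a0 = 0 -> v b0 = 0 -> a1 != a0 -> b1 != b0 ->
  (forall a b, a != a0 -> b != b0 -> u a + v b = 0) ->
  forall a b, u a + v b = v b1 *+ (a == a0) - v b1 *+ (b == b0).
Proof.
move=> ua0 vb0 a1_neq b1_neq uv0 a b.
have u_eq a' : a' != a0 -> u a' = - v b1 by move=> ?; apply/eqP; rewrite -addr_eq0 uv0.
have v_eq b' : b' != b0 -> v b' = v b1.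
  by move=> ?; apply: (addrI (u a1)); rewrite !uv0.
case: eqVneq => [->|a_neq]; case: eqVneq => [->|b_neq] /=.
- by rewrite ua0 vb0 addr0 subrr.
- by rewrite ua0 add0r v_eq // subr0.
- by rewrite u_eq // vb0 addr0 sub0r.
- by rewrite uv0 // subrr.
Qed.

Lemma sum_classification a0 b0 : (1 < q)%N -> u a0 = 0 -> v b0 = 0 ->
  (#|sum_support| <= 2 * (q - 1))%N ->
  [\/ forall a b, u a + v b = 0,
      exists k c, c != 0 /\ forall a b, u a + v b = c *+ (a == k),
      exists m c, c != 0 /\ forall a b, u a + v b = c *+ (b == m)
    | exists k m c, c != 0 /\ forall a b, u a + v b = c *+ (a == k) - c *+ (b == m)].
Proof.
move=> q_gt1 ua0 vb0 supp_le.
have card_u := cardsC (nonzero_set u); rewrite card_ord addnC in card_u.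
have card_v := cardsC (nonzero_set v); rewrite card_ord addnC in card_v.
have Zu_gt0 : (0 < #|~: nonzero_set u|)%N by apply/card_gt0P; exists a0; rewrite !inE ua0 eqxx.
have Zv_gt0 : (0 < #|~: nonzero_set v|)%N by apply/card_gt0P; exists b0; rewrite !inE vb0 eqxx.
have tight_count_zero : (#|~: nonzero_set u| * #|nonzero_set v|
    + #|nonzero_set u| * #|~: nonzero_set v| = 2 * (q - 1))%N ->
    forall a b, u a != 0 -> v b != 0 -> u a + v b = 0.
  move=> count_eq a b ua vb; apply/eqP; apply: contraT => uvab.
  by have := leq_trans (card_cross_lt ua vb uvab) supp_le; rewrite count_eq ltnn.
case: (cross_count_small Zu_gt0 Zv_gt0 card_u card_v (leq_trans card_cross_le supp_le)).
- case=> /nonzero_set0 u0 Nv_le1.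
  have [/nonzero_set0 v0|/nonzero_set1 [m vm v_eq]] :
      #|nonzero_set v| = 0%N \/ #|nonzero_set v| = 1%N by lia.
    by constructor 1 => a b; rewrite u0 v0 addr0.
  by constructor 3; exists m, (v m); split=> // a b; rewrite u0 add0r v_eq.
- case=> /nonzero_set0 v0 Nu_le1.
  have [/nonzero_set0 u0|/nonzero_set1 [k uk u_eq]] :
      #|nonzero_set u| = 0%N \/ #|nonzero_set u| = 1%N by lia.
    by constructor 1 => a b; rewrite u0 v0 addr0.
  by constructor 2; exists k, (u k); split=> // a b; rewrite v0 addr0 u_eq.
- case=> /nonzero_set1 [k uk u_eq] /nonzero_set1 [m vm v_eq] /tight_count_zero uv0.
  have vm_eq : v m = - u k by apply/eqP; rewrite -addr_eq0 addrC uv0.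
  constructor 4; exists k, m, (u k); split=> // a b.
  by rewrite u_eq v_eq vm_eq mulNrn.
- case=> Zu1 Zv1 /tight_count_zero uv0.
  have [a1 a1_neq] := exists_ord_neq a0 q_gt1.
  have [b1 b1_neq] := exists_ord_neq b0 q_gt1.
  have uv0_off a b : a != a0 -> b != b0 -> u a + v b = 0.
    move=> a_neq b_neq; apply: uv0.
      exact: nonzero_off_unique_zero ua0 Zu1 a_neq.
    exact: nonzero_off_unique_zero vb0 Zv1 b_neq.
  constructor 4; exists a0, b0, (v b1); split.
    exact: nonzero_off_unique_zero vb0 Zv1 b1_neq.
  exact: sum_vanishing_off_point ua0 vb0 a1_neq b1_neq uv0_off.
Qed.

End SumOfCoordinateFunctions.

Lemma subr_mulrb (R : zmodType) (c : R) (P Q : bool) :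
  c *+ P - c *+ Q = if P && ~~ Q then c else if Q && ~~ P then - c else 0.
Proof. by case: P; case: Q; rewrite /= ?subrr ?subr0 ?sub0r. Qed.

Section WordsOfLengthTwo.

Variable q : nat.

Definition word2 (a b : 'I_q) : word 2 q := [ffun i => if i == ord0 then a else b].

Lemma word2_ord0 a b : word2 a b ord0 = a.
Proof. by rewrite ffunE. Qed.

Lemma word2_ord_max a b : word2 a b ord_max = b.
Proof. by rewrite ffunE. Qed.

Lemma word2E (x : word 2 q) : word2 (x ord0) (x ord_max) = x.
Proof. by apply/ffunP => -[[|[|//]] i_lt]; rewrite ffunE //=; congr (x _); apply: val_inj. Qed.

Lemma word2_pair_inj : injective (fun ab : 'I_q * 'I_q => word2 ab.1 ab.2).
Proof.
move=> [a b] [a' b'] /= eq_w.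
have := congr1 (fun w : word 2 q => (w ord0, w ord_max)) eq_w.
by rewrite /= !word2_ord0 !word2_ord_max.
Qed.

Lemma ins_ord0_const (a b : 'I_q) : ins ord0 a [ffun=> b] = word2 a b.
Proof. by apply/ffunP => j; rewrite !ffunE; case: unliftP => [j' ->|->]; rewrite ?ffunE. Qed.

Lemma additive_word2 (R : nzRingType) (f : word 2 q -> R) : additive_fun f ->
  forall a0 b0 a b, f (word2 a b) = f (word2 a b0) + f (word2 a0 b) - f (word2 a0 b0).
Proof.
move=> f_add a0 b0 a b; have [c gc] := f_add ord0 a a0.
have := gc [ffun=> b]; have := gc [ffun=> b0]; rewrite /gfun !ins_ord0_const => <- eq_b.
by rewrite addrAC -eq_b subrK.
Qed.

End WordsOfLengthTwo.

Theorem lemma3 (R : realFieldType) (q : nat) (f : word 2 q -> R) :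
  (1 < q)%N -> additive_fun f -> (#|supp f| <= 2 * (q - 1))%N ->
  (forall x, f x = 0)
  \/ (exists (i : 'I_2) (k : 'I_q) (c : R), c != 0 /\
        forall x, f x = if x \in T k i then c else 0)
  \/ (exists (i j : 'I_2) (k m : 'I_q) (c : R), i != j /\ c != 0 /\
        forall x, f x = if (x \in T k i) && (x \notin T m j) then c
                        else if (x \in T m j) && (x \notin T k i) then - c
                        else 0).
Proof.
move=> q_gt1 f_add supp_le.
have /existsP[x0 /eqP fx0] : [exists x, f x == 0].
  apply: contraTT supp_le; rewrite negb_exists => /forallP f_nz.
  have -> : supp f = setT by apply/setP => x; rewrite !inE f_nz.
  by rewrite cardsT card_ffun !card_ord -ltnNge; nia.
pose u a := f (word2 a (x0 ord_max)); pose v b := f (word2 (x0 ord0) b).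
have u_a0 : u (x0 ord0) = 0 by rewrite /u word2E.
have v_b0 : v (x0 ord_max) = 0 by rewrite /v word2E.
have f_sum x : f x = u (x ord0) + v (x ord_max).
  by rewrite -{1}(word2E x) (additive_word2 f_add (x0 ord0) (x0 ord_max)) word2E fx0 subr0.
have card_le : (#|sum_support u v| <= #|supp f|)%N.
  rewrite -(card_imset _ (@word2_pair_inj q)); apply/subset_leq_card/subsetP.
  by move=> _ /imsetP[[a b] + ->]; rewrite !inE f_sum word2_ord0 word2_ord_max.
case: (sum_classification q_gt1 u_a0 v_b0 (leq_trans card_le supp_le)).
- by left => x; rewrite f_sum.
- move=> [k [c [c_nz uv]]]; right; left; exists ord0, k, c.
  by split=> // x; rewrite f_sum uv inE mulrb.
- move=> [m [c [c_nz uv]]]; right; left; exists ord_max, m, c.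
  by split=> // x; rewrite f_sum uv inE mulrb.
- move=> [k [m [c [c_nz uv]]]]; right; right; exists ord0, ord_max, k, m, c.
  by do 2!split=> //; move=> x; rewrite f_sum uv !inE subr_mulrb.
Qed.
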